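(* For each positive integer $n$, \[ p^{(2)}(n) = \frac{1}{2}\Bigl\{ \sum_{j=1}^{n-1} d(j)\, d(n-j) + d(n) - \sigma(n)\Bigr\}. \]
   Context: $p^{(2)}(n)$ is the number of partitions of $n$ having exactly two distinct part sizes; $d(n)$ is the number of positive divisors of $n$; $\sigma(n) = \sum_{d \mid n} d$. *)

From mathcomp Require Import all_boot all_order.
Set Implicit Arguments. Unset Strict Implicit. Unset Printing Implicit Defensive.

(* A partition of n is encoded as an n-tuple of naturals < n+1, sorted in
   nonincreasing order and summing to n; the nonzero entries are the parts
   (zeros are padding). Every partition of n has at most n parts, each <= n,
   so this is a bijection with the partitions of n. *)
Definition parts_of (n : nat) (t : n.-tuple 'I_n.+1) : seq nat :=
  [seq x <- map val t | 0 < x].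

Definition is_partition (n : nat) (t : n.-tuple 'I_n.+1) : bool :=
  sorted geq (map val t) && (sumn (map val t) == n).

Definition num_distinct_parts (n : nat) (t : n.-tuple 'I_n.+1) : nat :=
  size (undup (parts_of t)).

Definition p2 (n : nat) : nat :=
  #|[set t : n.-tuple 'I_n.+1 | is_partition t && (num_distinct_parts t == 2)]|.

Definition ndiv (n : nat) : nat := size (divisors n).
Definition sigma (n : nat) : nat := \sum_(d <- divisors n) d.

From mathcomp Require Import all_boot all_order all_algebra.
From mathcomp Require Import zify lra.
Import GRing.Theory.

Set Implicit Arguments.
Unset Strict Implicit.
Unset Printing Implicit Defensive.

(* A partition of n with exactly two part sizes a > b is determined by its two
   blocks: x parts equal to a and y parts equal to b, with a x + b y = n.
   Without the condition a > b, the positive solutions of a x + b y = n are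
   counted by splitting n = j + (n - j) with a x = j, which gives
   sum_j d(j) d(n - j).  Exchanging the blocks matches the solutions with a < b
   and those with a > b, and the solutions with a = b are the compositions
   x + y = n / a for the divisors a of n, of which there are
   sum_(a | n) (n / a - 1) = sigma(n) - d(n).  Hence
   2 p2(n) + sigma(n) - d(n) = sum_j d(j) d(n - j). *)

Lemma card_set_sum (T : finType) (P : pred T) : #|[set x | P x]| = \sum_x P x.
Proof. by rewrite -sum1dep_card big_mkcond. Qed.

Lemma card_set_pair (I J : finType) (P : I -> J -> bool) :
  #|[set p : I * J | P p.1 p.2]| = \sum_i \sum_j P i j.
Proof. by rewrite card_set_sum pair_big. Qed.

Lemma card_set_pair2 (I J K L : finType) (P : I -> J -> K -> L -> bool) :
  #|[set q : (I * J) * (K * L) | P q.1.1 q.1.2 q.2.1 q.2.2]| =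
  \sum_i \sum_j \sum_k \sum_l P i j k l.
Proof.
rewrite (card_set_pair (fun (p1 : I * J) (p2 : K * L) => P p1.1 p1.2 p2.1 p2.2)).
by rewrite [RHS]pair_big; apply: eq_bigr => -[i j] _ /=; rewrite [RHS]pair_big.
Qed.

Lemma card_ltngt (T : finType) (A : {set T}) (f g : T -> nat) :
  #|A| = #|[set q in A | f q < g q]| + #|[set q in A | g q < f q]|
         + #|[set q in A | f q == g q]|.
Proof.
rewrite !card_set_sum -!big_split -sum1_card big_mkcond; apply: eq_bigr => q _ /=.
by case: (q \in A) => //=; case: ltngtP.
Qed.

Lemma card_weight_pairs (T : finType) (A : {pred T}) (w : T -> nat) n :
  {in A, forall p, 0 < w p} ->
  #|[set pq : T * T | [&& pq.1 \in A, pq.2 \in A & w pq.1 + w pq.2 == n]]| =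
  \sum_(1 <= j < n) #|[set p in A | w p == j]| * #|[set p in A | w p == n - j]|.
Proof.
move=> w_gt0; rewrite (card_set_pair (fun p q => [&& p \in A, q \in A & w p + w q == n])).
under [RHS]eq_bigr do rewrite !card_set_sum big_distrlr /=.
rewrite [RHS]exchange_big; apply: eq_bigr => p _.
rewrite [RHS]exchange_big; apply: eq_bigr => q _ /=.
rewrite (eq_bigr (fun j =>
    if j == w p then [&& p \in A, q \in A & w q == n - j] : nat else 0));
  last by move=> j _; rewrite mulnb (eq_sym j); case: eqP => [<-|_]; rewrite ?andbT ?andbF.
rewrite -big_mkcond big_nat1_eq.
case p_A: (p \in A); case q_A: (q \in A); rewrite ?if_same //=.
by have := w_gt0 p p_A; have := w_gt0 q q_A; case: ifP; lia.
Qed.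

Lemma sum_divisors_ord m j (F : nat -> nat) :
  0 < j <= m -> \sum_(d <- divisors j) F d = \sum_(d < m.+1 | d %| j) F d.
Proof.
case/andP=> j_gt0 le_jm; rewrite -(big_mkord (dvdn^~ j)) -[RHS]big_filter.
apply: perm_big; apply: uniq_perm.
- exact: divisors_uniq.
- by rewrite filter_uniq ?iota_uniq.
move=> d; rewrite mem_filter mem_iota -dvdn_divisors //.
by case: (boolP (d %| j)) => //= /(dvdn_leq j_gt0); lia.
Qed.

Lemma sum_divisors_quotient n : 0 < n -> \sum_(d <- divisors n) n %/ d = sigma n.
Proof.
move=> n_gt0; have divn_divisorK d : d \in divisors n -> n %/ (n %/ d) = d.
  by rewrite -dvdn_divisors // => d_n; rewrite divnA // mulKn.
rewrite /sigma -(big_map (divn n) xpredT id); apply: perm_big; apply: uniq_perm.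
- by rewrite (map_inj_in_uniq (can_in_inj divn_divisorK)) divisors_uniq.
- exact: divisors_uniq.
move=> d; apply/mapP/idP => [[e e_n ->]|d_n].
  by move: e_n; rewrite -!dvdn_divisors // => /dvdn_div.
exists (n %/ d); last by rewrite divn_divisorK.
by move: d_n; rewrite -!dvdn_divisors // => /dvdn_div.
Qed.

Lemma sum_ord_mul_eq m a j : 0 < a -> j <= m ->
  \sum_(x < m.+1) (a * x == j) = (a %| j).
Proof.
move=> a_gt0 le_jm.
rewrite (eq_bigr (fun x : 'I_m.+1 => if x == j %/ a :> nat then (a %| j : nat) else 0));
  last first.
  move=> x _; apply/esym; case: (boolP (a %| j)) => [/dvdnP[k ->]|not_dvd].
    by rewrite mulnK // mulnC eqn_pmul2r //; case: eqP.
  have /negbTE-> : a * x != j by apply: contra not_dvd => /eqP <-; apply: dvdn_mulr.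
  by case: eqP.
have le_ja : j %/ a <= m := leq_trans (leq_div j a) le_jm.
by rewrite -big_mkcond (big_ord1_eq _ (fun=> a %| j : nat)) ltnS le_ja.
Qed.

Lemma card_factor_pairs m j : 0 < j <= m ->
  #|[set p : 'I_m.+1 * 'I_m.+1 | [&& 0 < p.1, 0 < p.2 & p.1 * p.2 == j]]| = ndiv j.
Proof.
move=> /andP[j_gt0 le_jm].
rewrite (card_set_pair (fun a x : 'I_m.+1 => [&& 0 < a, 0 < x & a * x == j])).
rewrite /ndiv -sum1_size (sum_divisors_ord _ (m := m)) ?j_gt0 // [RHS]big_mkcond /=.
apply: eq_bigr => a _; have [->|a_gt0] := posnP a.
  by rewrite big1 // dvd0n gtn_eqF.
rewrite -[RHS]/(a %| j : nat) -(sum_ord_mul_eq a_gt0 le_jm); apply: eq_bigr => x _.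
rewrite /= andb_idl // => /eqP ax_j.
by move: j_gt0; rewrite -ax_j muln_gt0 => /andP[].
Qed.

Lemma card_compositions2 m s : s <= m ->
  #|[set p : 'I_m.+1 * 'I_m.+1 | [&& 0 < p.1, 0 < p.2 & p.1 + p.2 == s]]| = s.-1.
Proof.
move=> le_sm; pose A := [pred x : 'I_m.+1 | 0 < x].
have card_point j : 0 < j <= m -> #|[set x in A | val x == j]| = 1.
  move=> /andP[j_gt0 le_jm]; rewrite -(cards1 (inord j : 'I_m.+1)); apply: eq_card => x.
  by rewrite !inE -val_eqE /= inordK // andb_idl // => /eqP->.
transitivity #|[set pq | [&& pq.1 \in A, pq.2 \in A & val pq.1 + val pq.2 == s]]|.
  by apply: eq_card => p; rewrite !inE.
rewrite card_weight_pairs // (eq_big_nat _ _ (F2 := fun=> 1)) => [|j /andP[j_gt0 lt_js]].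
  by rewrite sum_nat_const_nat muln1 subn1.
by rewrite !card_point // ?subn_gt0; lia.
Qed.

Lemma card_scaled_compositions2 m n a : 0 < a -> n <= m ->
  #|[set p : 'I_m.+1 * 'I_m.+1 | [&& 0 < p.1, 0 < p.2 & a * p.1 + a * p.2 == n]]| =
  if a %| n then (n %/ a).-1 else 0.
Proof.
move=> a_gt0 le_nm; case: (boolP (a %| n)) => [/dvdnP[k n_ka] | not_dvd].
  rewrite n_ka mulnK // -(card_compositions2 (m := m)); last first.
    by apply: leq_trans le_nm; rewrite n_ka leq_pmulr.
  by apply: eq_card => p; rewrite !inE -mulnDr mulnC eqn_pmul2r.
apply: eq_card0 => p; rewrite !inE -mulnDr.
have /negbTE-> : a * (p.1 + p.2) != n by apply: contra not_dvd => /eqP <-; apply: dvdn_mulr.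
by rewrite !andbF.
Qed.

Definition blocks (a x b y z : nat) : seq nat := nseq x a ++ nseq y b ++ nseq z 0.

Lemma size_blocks a x b y z : size (blocks a x b y z) = x + y + z.
Proof. by rewrite !size_cat !size_nseq addnA. Qed.

Lemma sumn_blocks a x b y z : sumn (blocks a x b y z) = a * x + b * y.
Proof. by rewrite !sumn_cat !sumn_nseq mul0n addn0 mulnC [b * y]mulnC. Qed.

Lemma count_blocks p a x b y z :
  count_mem p (blocks a x b y z) = (p == a) * x + (p == b) * y + (p == 0) * z.
Proof. by rewrite !count_cat !count_nseq addnA !(eq_sym p). Qed.

Lemma sorted_blocks a x b y z : b <= a -> sorted geq (blocks a x b y z).
Proof.
move=> le_ba; apply/(sortedP 0) => i.
rewrite !size_cat !size_nseq => lt_i.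
rewrite !nth_cat !size_nseq !nth_nseq.
do ![case: ifP]; lia.
Qed.

Lemma blocks_inj a1 x1 b1 y1 z1 a2 x2 b2 y2 z2 :
  0 < b1 < a1 -> 0 < b2 < a2 -> 0 < x1 -> 0 < y1 -> 0 < x2 -> 0 < y2 ->
  blocks a1 x1 b1 y1 z1 = blocks a2 x2 b2 y2 z2 ->
  [/\ a1 = a2, x1 = x2, b1 = b2 & y1 = y2].
Proof.
move=> ab1 ab2 x1_gt0 y1_gt0 x2_gt0 y2_gt0 eq_blocks.
have head_a a x b y z : 0 < x -> nth 0 (blocks a x b y z) 0 = a.
  by move=> x_gt0; rewrite nth_cat size_nseq x_gt0 nth_nseq x_gt0.
have nth_b a x b y z : 0 < y -> nth 0 (blocks a x b y z) x = b.
  move=> y_gt0; rewrite nth_cat size_nseq ltnn subnn nth_cat size_nseq.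
  by rewrite y_gt0 nth_nseq y_gt0.
have eq_a : a1 = a2.
  by rewrite -(head_a a1 x1 b1 y1 z1) // -(head_a a2 x2 b2 y2 z2) // eq_blocks.
have cnt p : count_mem p (blocks a1 x1 b1 y1 z1) = count_mem p (blocks a2 x2 b2 y2 z2).
  by rewrite eq_blocks.
have eq_x : x1 = x2 by move: (cnt a1); rewrite !count_blocks -eq_a !eqxx; lia.
have eq_b : b1 = b2.
  by rewrite -(nth_b a1 x1 b1 y1 z1) // -(nth_b a2 x2 b2 y2 z2) // eq_blocks eq_x.
by split=> //; move: (cnt b1); rewrite !count_blocks -eq_a -eq_b !eqxx; lia.
Qed.

Lemma count_mem_perm (T : eqType) (s1 s2 : seq T) :
  (forall x, count_mem x s1 = count_mem x s2) -> perm_eq s1 s2.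
Proof.
elim: s1 s2 => [|x s1 IH] s2 cnt.
  by case: s2 cnt => // y s2 /(_ y); rewrite /= eqxx.
have x_s2 : x \in s2 by rewrite -has_pred1 has_count -cnt /= eqxx.
rewrite (permPr (perm_to_rem x_s2)) perm_cons.
apply: IH => y; move: (cnt y); rewrite (permP (perm_to_rem x_s2)) /=; lia.
Qed.

Lemma sorted_blocksE s a b : 0 < b < a -> sorted geq s -> {subset s <= [:: a; b; 0]} ->
  s = blocks a (count_mem a s) b (count_mem b s) (count_mem 0 s).
Proof.
move=> /andP[b_gt0 lt_ba] s_geq s_sub.
apply: (sorted_eq (leT := geq)) => //.
- by move=> y x z /= le_yx le_zy; apply: leq_trans le_zy le_yx.
- by move=> x y /andP[le_yx le_xy]; apply/anti_leq/andP.
- by apply: sorted_blocks; apply: ltnW.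
apply: count_mem_perm => p; rewrite count_blocks.
have [|p_ns] := boolP (p \in [:: a; b; 0]).
  by rewrite !inE => /or3P[] /eqP->; lia.
have /count_memPn-> : p \notin s by apply: contra p_ns; apply: s_sub.
by move: p_ns; rewrite !inE; lia.
Qed.

Lemma two_positive_values s : size (undup [seq x <- s | 0 < x]) = 2 ->
  exists a b, [/\ 0 < b < a, a \in s, b \in s & {subset s <= [:: a; b; 0]}].
Proof.
case E: (undup _) => [|u [|v []]] // _.
have := undup_uniq [seq x <- s | 0 < x]; rewrite E /= inE andbT => neq_uv.
have pos_s x : (x \in s) && (0 < x) = (x \in [:: u; v]).
  by rewrite -E mem_undup mem_filter andbC.
have /andP[u_s u_gt0] : (u \in s) && (0 < u) by rewrite pos_s mem_head.
have /andP[v_s v_gt0] : (v \in s) && (0 < v) by rewrite pos_s !inE eqxx orbT.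
exists (maxn u v), (minn u v); split.
- by apply/andP; split; lia.
- by rewrite /maxn; case: ifP.
- by rewrite /minn; case: ifP.
move=> x x_s; have [->|x_gt0] := posnP x; first by rewrite !inE eqxx !orbT.
by move: (pos_s x); rewrite x_s x_gt0 !inE; lia.
Qed.

Definition ord_tuple n (s : seq nat) : n.-tuple 'I_n.+1 := [tuple inord (nth 0 s i) | i < n].

Lemma map_val_ord_tuple n s : size s = n -> all (leq^~ n) s -> map val (ord_tuple n s) = s.
Proof.
move=> size_s le_s_n; rewrite /= -map_comp.
rewrite -[RHS](mkseq_nth 0 s) size_s /mkseq -val_enum_ord -map_comp.
by apply: eq_map => i /=; rewrite inordK // ltnS (allP le_s_n) // mem_nth ?size_s.
Qed.

Notation block_pair n := (('I_n.+1 * 'I_n.+1) * ('I_n.+1 * 'I_n.+1))%type.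

(* ((a, x), (b, y)) stands for x parts of size a together with y parts of
   size b. *)
Definition block_pairs n : {set block_pair n} :=
  [set q : block_pair n | [&& 0 < q.1.1, 0 < q.1.2, 0 < q.2.1, 0 < q.2.2 &
               q.1.1 * q.1.2 + q.2.1 * q.2.2 == n]].

Lemma block_pairs_size n (a x b y : 'I_n.+1) :
  ((a, x), (b, y)) \in block_pairs n -> x + y <= n.
Proof.
rewrite inE => /and5P[/= a_gt0 _ b_gt0 _ /eqP sum_n].
by have := leq_pmull x a_gt0; have := leq_pmull y b_gt0; lia.
Qed.

Definition partition_of_blocks n (q : block_pair n) :=
  ord_tuple n (blocks q.1.1 q.1.2 q.2.1 q.2.2 (n - (q.1.2 + q.2.2))).

Lemma val_partition_of_blocks n (a x b y : 'I_n.+1) : ((a, x), (b, y)) \in block_pairs n ->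
  map val (partition_of_blocks ((a, x), (b, y))) = blocks a x b y (n - (x + y)).
Proof.
move=> q_n; apply: map_val_ord_tuple.
  by rewrite size_blocks subnKC // (block_pairs_size q_n).
by rewrite !all_cat !all_nseq /= !leq_ord !orbT.
Qed.

Notation ordered_block_pairs n := [set q in block_pairs n | q.2.1 < q.1.1].

Lemma partition_of_blocks_inj n :
  {in ordered_block_pairs n &, injective (@partition_of_blocks n)}.
Proof.
move=> [[a1 x1] [b1 y1]] [[a2 x2] [b2 y2]].
move=> /setIdP[q1_n lt_ba1] /setIdP[q2_n lt_ba2] /(congr1 (fun t : n.-tuple _ => map val t)).
rewrite (val_partition_of_blocks q1_n) (val_partition_of_blocks q2_n).
move: q1_n q2_n; rewrite !inE /=.
move=> /and5P[_ x1_gt0 b1_gt0 y1_gt0 _] /and5P[_ x2_gt0 b2_gt0 y2_gt0 _].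
case/blocks_inj; rewrite ?b1_gt0 ?b2_gt0 //.
by move=> /val_inj-> /val_inj-> /val_inj-> /val_inj->.
Qed.

Lemma partition_of_blocks_two_sizes n q : q \in ordered_block_pairs n ->
  is_partition (partition_of_blocks q) && (num_distinct_parts (partition_of_blocks q) == 2).
Proof.
case: q => [[a x] [b y]] /setIdP[q_n lt_ba].
rewrite /is_partition /num_distinct_parts /parts_of (val_partition_of_blocks q_n).
rewrite sorted_blocks ?(ltnW lt_ba) // sumn_blocks.
move: q_n; rewrite inE /= => /and5P[a_gt0 x_gt0 b_gt0 y_gt0 /eqP ->]; rewrite eqxx /=.
rewrite !filter_cat !filter_nseq a_gt0 b_gt0 /= !mul1n cats0.
have neq_ab : (a : nat) != b by rewrite gtn_eqF.
suff /perm_size-> :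
    perm_eq (undup (nseq x (a : nat) ++ nseq y (b : nat))) [:: (a : nat); (b : nat)] by [].
apply: uniq_perm; rewrite ?undup_uniq //= ?inE ?neq_ab // => p.
by rewrite mem_undup mem_cat !mem_nseq !inE x_gt0 y_gt0.
Qed.

Lemma two_sizes_partition_of_blocks n (t : n.-tuple 'I_n.+1) :
  is_partition t && (num_distinct_parts t == 2) ->
  exists2 q, q \in ordered_block_pairs n & t = partition_of_blocks q.
Proof.
case/andP=> /andP[t_geq /eqP t_sum] /eqP /two_positive_values[a [b [ab a_t b_t t_sub]]].
have t_blocks := sorted_blocksE ab t_geq t_sub.
case/andP: ab => b_gt0 lt_ba.
set s := map val t in t_geq t_sum a_t b_t t_sub t_blocks.
set x := count_mem a s in t_blocks *; set y := count_mem b s in t_blocks *.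
have size_s : x + y + count_mem 0 s = n.
  by move: (congr1 size t_blocks); rewrite size_blocks size_map size_tuple.
have le_n p : p \in s -> p <= n by case/mapP=> i _ ->; apply: leq_ord.
have [x_gt0 y_gt0] : 0 < x /\ 0 < y by rewrite -!has_count !has_pred1.
have [le_an le_bn le_xn le_yn] : [/\ a <= n, b <= n, x <= n & y <= n].
  by split; [apply: le_n | apply: le_n | lia | lia].
have q_n : ((inord a, inord x), (inord b, inord y)) \in block_pairs n.
  rewrite inE /= !inordK // x_gt0 y_gt0 b_gt0 -t_sum t_blocks sumn_blocks eqxx !andbT.
  by apply: leq_trans lt_ba.
exists ((inord a, inord x), (inord b, inord y)); first by rewrite inE q_n /= !inordK.
apply/val_inj/(inj_map val_inj); rewrite /= (val_partition_of_blocks q_n) !inordK //.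
by change (s = blocks a x b y (n - (x + y))); rewrite {1}t_blocks; congr blocks; lia.
Qed.

Lemma p2_ordered_block_pairs n : p2 n = #|ordered_block_pairs n|.
Proof.
rewrite /p2 -(card_in_imset (@partition_of_blocks_inj n)); apply: eq_card => t.
rewrite inE; apply/idP/imsetP.
- by case/two_sizes_partition_of_blocks => q q_n ->; exists q.
- by case=> q q_n ->; apply: partition_of_blocks_two_sizes.
Qed.

Lemma card_block_pairs n : 0 < n -> #|block_pairs n| = \sum_(1 <= j < n) ndiv j * ndiv (n - j).
Proof.
move=> n_gt0; pose A := [pred p : 'I_n.+1 * 'I_n.+1 | (0 < p.1) && (0 < p.2)].
transitivity
  #|[set pq | [&& pq.1 \in A, pq.2 \in A & pq.1.1 * pq.1.2 + pq.2.1 * pq.2.2 == n]]|.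
  by apply: eq_card => q; rewrite !inE !andbA.
rewrite (card_weight_pairs (w := fun p : 'I_n.+1 * 'I_n.+1 => p.1 * p.2)); last first.
  by move=> p /andP[a_gt0 x_gt0]; rewrite muln_gt0 a_gt0.
have fiber k : 0 < k <= n -> #|[set p in A | p.1 * p.2 == k]| = ndiv k.
  by move=> k_ok; rewrite -(card_factor_pairs k_ok); apply: eq_card => p; rewrite !inE andbA.
by apply: eq_big_nat => j j_ok; rewrite !fiber //; lia.
Qed.

Lemma card_block_pairs_lt n :
  #|[set q in block_pairs n | q.1.1 < q.2.1]| = #|ordered_block_pairs n|.
Proof.
rewrite -(card_preimset _ (can_inj swap_pairK)); apply: eq_card => -[[a x] [b y]].
by rewrite !inE /= addnC; lia.
Qed.

Lemma card_block_pairs_eq n : 0 < n ->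
  #|[set q in block_pairs n | q.1.1 == q.2.1]| + ndiv n = sigma n.
Proof.
move=> n_gt0.
transitivity (\sum_(a < n.+1) \sum_(x < n.+1) \sum_(b < n.+1) \sum_(y < n.+1)
    [&& 0 < a, 0 < x, 0 < b, 0 < y, a * x + b * y == n & a == b] + ndiv n).
  congr (_ + _); rewrite -(card_set_pair2 (fun a x b y : 'I_n.+1 =>
    [&& 0 < a, 0 < x, 0 < b, 0 < y, a * x + b * y == n & a == b])).
  by apply: eq_card => q; rewrite !inE -!andbA.
rewrite (eq_bigr (fun a : 'I_n.+1 => if a %| n then (n %/ a).-1 else 0)) => [|a _]; last first.
  rewrite exchange_big (bigD1 a) //= [X in _ + X]big1 ?addn0 => [|b neq_ba]; last first.
    by apply: big1 => x _; apply: big1 => y _; rewrite [a == b]eq_sym (negPf neq_ba) !andbF.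
  have [->|a_gt0] := posnP a.
    by rewrite dvd0n gtn_eqF //; apply: big1 => x _; apply: big1.
  rewrite -(card_scaled_compositions2 a_gt0 (leqnn n)).
  rewrite (card_set_pair (fun x y : 'I_n.+1 => [&& 0 < x, 0 < y & a * x + a * y == n])).
  by apply: eq_bigr => x _; apply: eq_bigr => y _; rewrite eqxx andbT.
rewrite -big_mkcond -(sum_divisors_ord (fun d => (n %/ d).-1)) ?n_gt0 ?leqnn //.
rewrite /ndiv -sum1_size -big_split.
rewrite -sum_divisors_quotient //; apply: eq_big_seq => d; rewrite -dvdn_divisors // => d_n.
by rewrite /= addn1 prednK // divn_gt0 ?(dvdn_gt0 n_gt0 d_n) // (dvdn_leq n_gt0 d_n).
Qed.

Local Open Scope ring_scope.

Theorem corollary2p5 (n : nat) : (0 < n)%N ->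
  (p2 n)%:R =
    (1 / 2 : rat) *
    ((\sum_(1 <= j < n) ((ndiv j * ndiv (n - j))%N)%:R)
       + (ndiv n)%:R - (sigma n)%:R).
Proof.
move=> n_gt0.
have p2_twice :
    (2 * p2 n + sigma n = \sum_(1 <= j < n) ndiv j * ndiv (n - j) + ndiv n)%N.
  rewrite -card_block_pairs //.
  rewrite (card_ltngt _ (fun q : block_pair n => q.1.1 : nat) (fun q => q.2.1 : nat)) /=.
  rewrite card_block_pairs_lt -(card_block_pairs_eq n_gt0) p2_ordered_block_pairs.
  by rewrite mul2n -addnn !addnA.
have := congr1 (fun m => m%:R : rat) p2_twice; rewrite /= !natrD -natr_sum.
by lra.
Qed.
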